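(* Let $M$ be a matroid of rank $d$, viewed as its collection of independent sets, and for $0\le i\le d$ let $f_i$ be the number of $i$-element independent sets of $M$. If $M$ has no coloops, then for every $0\le k\le d$, $$0\le \sum_{i=k}^{d}\binom{i}{k}(-2)^{d-i}f_i.$$
   Context: A coloop of a matroid is an element contained in every basis. *)

From mathcomp Require Import all_boot all_order all_algebra.
Set Implicit Arguments. Unset Strict Implicit. Unset Printing Implicit Defensive.
Import GRing.Theory Num.Theory.

Definition is_matroid (T : finType) (I : {set {set T}}) : Prop :=
  [/\ set0 \in I,
      (forall A B : {set T}, B \in I -> A \subset B -> A \in I) &
      (forall A B : {set T}, A \in I -> B \in I -> #|A| < #|B| ->
         exists2 x, x \in B :\: A & x |: A \in I)].

Definition is_basis (T : finType) (I : {set {set T}}) (B : {set T}) : Prop :=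
  B \in I /\ (forall C : {set T}, C \in I -> B \subset C -> C = B).

Definition is_coloop (T : finType) (I : {set {set T}}) (x : T) : Prop :=
  forall B : {set T}, is_basis I B -> x \in B.

Definition mrank (T : finType) (I : {set {set T}}) : nat :=
  \max_(A in I) #|A|.

Definition fvec (T : finType) (I : {set {set T}}) (i : nat) : nat :=
  #|[set A in I | #|A| == i]|.

(* Let g(M) be the sum of (-2)^(r(M) - |A|) over the independent sets A of M.
   Grouping the independent sets according to their k-element subsets shows that
   the k-th sum of the theorem is the sum of g(M/K) over the independent K with
   |K| = k, and contractions of a coloop-free matroid are coloop-free; so it
   suffices to show g(M) >= 0 for coloop-free M, by induction on M.
   If M has rank 0 then g(M) = 1.  Otherwise pick a non-loop e and its series
   class S: e together with the elements lying in every basis that avoids e.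
   Every basis misses at most one element of S, hence an independent set either
   contains S or is the union of an independent set A of M \ S with a proper
   subset X of S, and all such unions are independent.  As
   r(M \ S) = r(M) + 1 - |S|,
     g(M) = g(M/S) + c * g(M \ S),   c = sum_(X proper in S) (-2)^(|S|-1-|X|),
   and -2c = (-1)^|S| - 1, so c is 0 or 1.  Both minors are smaller and
   coloop-free. *)

From mathcomp Require Import all_boot all_order all_algebra.
From mathcomp Require Import zify.
Import GRing.Theory Num.Theory.

Set Implicit Arguments. Unset Strict Implicit. Unset Printing Implicit Defensive.

Lemma cardsU_disjoint (T : finType) (A B : {set T}) :
  [disjoint A & B] -> #|A :|: B| = #|A| + #|B|.
Proof. by move=> dAB; rewrite cardsU disjoint_setI0 // cards0 subn0. Qed.

Lemma disjoint_setDl (T : finType) (A B : {set T}) : [disjoint A :\: B & B].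
Proof. by rewrite disjoints_subset subsetDr. Qed.

Lemma disjoint_setU1 (T : finType) (x : T) (A B : {set T}) :
  [disjoint x |: A & B] = (x \notin B) && [disjoint A & B].
Proof. by rewrite -disjointU1; apply: eq_disjoint => y; rewrite !inE. Qed.

Lemma setDUK (T : finType) (A B : {set T}) : B \subset A -> (A :\: B) :|: B = A.
Proof. by move=> sBA; rewrite -{2}(setIidPr sBA) setUC setID. Qed.

Lemma setUDK (T : finType) (A B : {set T}) : [disjoint A & B] -> (A :|: B) :\: B = A.
Proof. by move=> dAB; rewrite setDUl setDv setU0; apply/setDidPl. Qed.

Section Matroid.
Variables (T : finType) (I : {set {set T}}).
Hypothesis matI : is_matroid I.
Implicit Types A B C : {set T}.

Lemma indep_sub A B : B \in I -> A \subset B -> A \in I.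
Proof. by case: matI => _ + _; apply. Qed.

Lemma indep_card_le_rank A : A \in I -> #|A| <= mrank I.
Proof. by move=> AI; apply: (leq_bigmax_cond A). Qed.

Lemma exists_indep_rank : exists2 B, B \in I & #|B| = mrank I.
Proof.
case: matI => I0 _ _; have : 0 < #|I| by apply/card_gt0P; exists set0.
by case/(eq_bigmax_cond (fun A : {set T} => #|A|)) => B; exists B.
Qed.

Lemma indep_augment A B : A \in I -> B \in I -> #|A| <= #|B| ->
  exists C, [/\ C \in I, A \subset C, C \subset A :|: B & #|C| = #|B|].
Proof.
move=> + BI; elim: {A}_.+1 {-2}A (ltnSn (#|B| - #|A|)) => // n IHn A.
move=> ltBA AI leAB; have [eqAB | neAB] := eqVneq #|A| #|B|.
  by exists A; rewrite subsetUl.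
have ltAB : #|A| < #|B| by rewrite ltn_neqAle neAB.
case: matI => _ _ /(_ A B AI BI ltAB) [x /setDP [xB xA] xAI].
have [||C [CI sxAC sCxAB cC]] := IHn (x |: A) _ xAI; rewrite ?cardsU1 ?xA /=; [lia | lia |].
exists C; split => //; first exact: subset_trans (subsetUr _ _) sxAC.
by apply: subset_trans sCxAB _; rewrite !subUset sub1set inE xB orbT subsetUl subsetUr.
Qed.

Lemma is_basisE B : is_basis I B <-> B \in I /\ #|B| = mrank I.
Proof.
split=> [[BI maxB] | [BI cB]]; last first.
  by split=> // C CI sBC; apply/eqP; rewrite eq_sym eqEcard sBC cB indep_card_le_rank.
split=> //; apply/eqP; rewrite eqn_leq indep_card_le_rank //=.
have [B' B'I cB'] := exists_indep_rank.
have [|C [CI sBC _ cC]] := indep_augment BI B'I.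
  by rewrite cB' indep_card_le_rank.
by rewrite -cB' -cC (maxB C CI sBC).
Qed.

Definition coloop_free :=
  forall x, exists B, [/\ B \in I, #|B| = mrank I & x \notin B].

Lemma coloop_freeP : coloop_free <-> forall x, ~ is_coloop I x.
Proof.
split=> [cfI x colx | nocol x].
  by have [B [BI cB /negP]] := cfI x; apply; apply/colx/is_basisE.
have [/existsP [B /and3P [BI /eqP cB xB]] | /existsPn noB] :=
  boolP [exists B, [&& B \in I, #|B| == mrank I & x \notin B]].
  by exists B.
case: (nocol x) => B /is_basisE [BI cB].
by move: (noB B); rewrite BI cB eqxx negbK.
Qed.

End Matroid.

Section Minors.
Variables (T : finType) (I : {set {set T}}).
Hypothesis matI : is_matroid I.
Implicit Types A B C S : {set T}.

Definition contract S := [set A : {set T} | [disjoint A & S] && (A :|: S \in I)].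
Definition delete S := [set A in I | [disjoint A & S]].

Lemma contract_matroid S : S \in I -> is_matroid (contract S).
Proof.
move=> SI; split.
- by rewrite inE set0U SI andbT disjoints_subset sub0set.
- move=> A B; rewrite !inE => /andP [dBS BSI] sAB.
  by rewrite (disjointWl sAB dBS) (indep_sub matI BSI) ?setSU.
move=> A B; rewrite !inE => /andP [dAS ASI] /andP [dBS BSI].
rewrite -(ltn_add2r #|S|) -!cardsU_disjoint //.
case: matI => _ _ /(_ _ _ ASI BSI) /[apply] -[x].
rewrite !inE negb_or => /andP [/andP [xA xS] /orP [xB | /idPn//]] xASI.
by exists x; rewrite !inE ?xB ?xA // disjoint_setU1 xS dAS -setUA.
Qed.

Lemma delete_matroid S : is_matroid (delete S).
Proof.
case: matI => I0 subI augI; split.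
- by rewrite inE I0 disjoints_subset sub0set.
- move=> A B; rewrite !inE => /andP [BI dBS] sAB.
  by rewrite (subI A B BI sAB) (disjointWl sAB dBS).
move=> A B; rewrite !inE => /andP [AI dAS] /andP [BI dBS].
case/(augI A B AI BI) => x /setDP [xB xA] xAI; exists x; first by rewrite inE xB xA.
by rewrite inE xAI disjoint_setU1 (disjointFr dBS xB).
Qed.

Lemma indep_extend_contract S B : S \in I -> B \in I -> #|B| = mrank I ->
  exists C, [/\ C \in contract S, #|C| = mrank I - #|S| & C \subset B].
Proof.
move=> SI BI cB; have [|C [CI sSC sCSB cC]] := indep_augment matI SI BI.
  by rewrite cB indep_card_le_rank.
exists (C :\: S); split; first by rewrite inE disjoint_setDl setDUK.
  by rewrite cardsDS // cC cB.
by rewrite subDset.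
Qed.

Lemma mrank_contract S : S \in I -> mrank (contract S) = mrank I - #|S|.
Proof.
move=> SI; apply/eqP; rewrite eqn_leq; apply/andP; split.
  apply/bigmax_leqP => A; rewrite inE => /andP [dAS ASI].
  by have := indep_card_le_rank ASI; rewrite cardsU_disjoint //; lia.
have [B BI cB] := exists_indep_rank matI.
by have [C [CI <- _]] := indep_extend_contract SI BI cB; apply: indep_card_le_rank.
Qed.

Lemma contract_coloop_free S : S \in I -> coloop_free I -> coloop_free (contract S).
Proof.
move=> SI cfI x; have [B [BI cB xB]] := cfI x.
have [C [CI cC sCB]] := indep_extend_contract SI BI cB.
exists C; split; rewrite ?mrank_contract //.
by apply: contra xB; apply: (subsetP sCB).
Qed.

Lemma big_contract (R : nmodType) S (F : {set T} -> R) :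
  (\sum_(A in I | S \subset A) F A = \sum_(A in contract S) F (A :|: S))%R.
Proof.
rewrite (reindex_onto (fun A => A :|: S) (fun A => A :\: S)) /=; last first.
  by move=> A /andP [_ sSA]; apply: setDUK.
apply: eq_bigl => A; rewrite inE subsetUr andbT andbC.
have [dAS | ndAS] := boolP [disjoint A & S]; first by rewrite setUDK // eqxx.
suff /negbTE-> : (A :|: S) :\: S != A by [].
by apply: contra ndAS => /eqP <-; apply: disjoint_setDl.
Qed.

Lemma card_contract_lt S : S != set0 -> #|contract S| < #|I|.
Proof.
move=> nzS; have injUS : {in contract S &, injective (fun A => A :|: S)}.
  move=> A B; rewrite !inE => /andP [dAS _] /andP [dBS _] eqABS.
  by rewrite -(setUDK dAS) eqABS setUDK.
rewrite -(card_in_imset injUS); apply: proper_card; apply/properP; split.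
  by apply/subsetP => _ /imsetP [A + ->]; rewrite inE => /andP [_ ->].
exists set0; first by case: matI.
by apply/imsetP => -[A _ /esym/eqP]; rewrite setU_eq0 (negbTE nzS) andbF.
Qed.

Lemma card_delete_lt S x : [set x] \in I -> x \in S -> #|delete S| < #|I|.
Proof.
move=> xI xS; apply: proper_card; apply/properP; split.
  by apply/subsetP => A; rewrite inE => /andP [].
by exists [set x] => //; rewrite inE xI disjoints1 xS.
Qed.

End Minors.

Section SeriesClass.
Variables (T : finType) (I : {set {set T}}).
Hypotheses (matI : is_matroid I) (cfI : coloop_free I).
Variable e : T.
Implicit Types A B C X : {set T}.

Definition series_class := [set f | (f == e) ||
  [forall B in I, (#|B| == mrank I) && (e \notin B) ==> (f \in B)]].
Local Notation S := series_class.

Lemma series_class_id : e \in S.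
Proof. by rewrite inE eqxx. Qed.

Lemma series_class_sub_basis B f : B \in I -> #|B| = mrank I -> e \notin B ->
  f \in S -> f != e -> f \in B.
Proof.
move=> BI cB eB; rewrite inE => /orP [-> //|/forall_inP /(_ B BI)].
by rewrite cB eqxx eB.
Qed.

Lemma basis_setI_series_class B : B \in I -> #|B| = mrank I -> e \notin B ->
  B :&: S = S :\ e.
Proof.
move=> BI cB eB; apply/setP => f; rewrite in_setI in_setD1.
have [-> | fe] := eqVneq f e; first by rewrite (negbTE eB).
by have [/(series_class_sub_basis BI cB eB)-> // | ] := boolP (f \in S); rewrite andbF.
Qed.

Lemma series_class_notin_basis B y z : B \in I -> #|B| = mrank I ->
  y \in S -> z \in S -> y \notin B -> z \notin B -> y = z.
Proof.
move=> BI cB yS zS yB zB.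
have [eB | eB] := boolP (e \in B); last first.
  have sB := series_class_sub_basis BI cB eB.
  by rewrite (eqP (contraNT (sB y yS) yB)) (eqP (contraNT (sB z zS) zB)).
have [B2 [B2I cB2 eB2]] := cfI e.
have BeI : B :\ e \in I := indep_sub matI BI (subD1set B e).
have cBe : #|B :\ e| = (mrank I).-1 by move: cB; rewrite (cardsD1 e B) eB; lia.
have r_gt0 : 0 < mrank I by rewrite -cB; apply/card_gt0P; exists e.
have : #|B :\ e| < #|B2| by rewrite cBe cB2 prednK.
case: matI => _ _ /(_ _ _ BeI B2I) /[apply] -[x /setDP [xB2 xBe] xBeI].
have xe : x != e by apply: contraNneq eB2 => <-.
have cxBe : #|x |: (B :\ e)| = mrank I by rewrite cardsU1 xBe cBe; lia.
have exBe : e \notin x |: (B :\ e) by rewrite !inE negb_or eq_sym xe eqxx.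
have sB' := series_class_sub_basis xBeI cxBe exBe.
have ye : y != e by apply: contraNneq yB => ->.
have ze : z != e by apply: contraNneq zB => ->.
move: (sB' y yS ye) (sB' z zS ze).
by rewrite !inE (negbTE yB) (negbTE zB) !andbF !orbF => /eqP-> /eqP->.
Qed.

Lemma indep_setU_series_classD1 A y : A \in I -> [disjoint A & S] -> y \in S ->
  A :|: (S :\ y) \in I.
Proof.
move=> AI dAS yS; have [B [BI cB yB]] := cfI y.
have [|C [CI sAC sCAB cC]] := indep_augment matI AI BI.
  by rewrite cB indep_card_le_rank.
apply: (indep_sub matI CI); rewrite subUset sAC; apply/subsetP => z /setD1P [zy zS].
apply: contraNT zy => zC; apply/eqP/(series_class_notin_basis CI (etrans cC cB) zS yS zC).
by apply: contra yB => /(subsetP sCAB); rewrite inE (disjointFl dAS yS).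
Qed.

Lemma indep_setU_proper_series_class A X : A \in I -> [disjoint A & S] ->
  X \proper S -> A :|: X \in I.
Proof.
move=> AI dAS /properP [sXS [y yS yX]].
apply: (indep_sub matI (indep_setU_series_classD1 AI dAS yS)); rewrite setUS //.
by rewrite subsetD1 sXS.
Qed.

Lemma card_basis_setD_series_class B : B \in I -> #|B| = mrank I -> e \notin B ->
  #|B :\: S| + #|S| = (mrank I).+1.
Proof.
move=> BI cB eB; have BS := basis_setI_series_class BI cB eB.
have leSB : #|S :\ e| <= #|B| by rewrite -BS subset_leq_card ?subsetIl.
by rewrite (cardsD1 e S) series_class_id cardsD BS addnS subnK // cB.
Qed.

Lemma mrank_delete_series_class : mrank (delete I S) + #|S| = (mrank I).+1.
Proof.
have [B [BI cB eB]] := cfI e; rewrite -(card_basis_setD_series_class BI cB eB).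
congr (_ + _); apply/eqP; rewrite eqn_leq; apply/andP; split; last first.
  by apply: indep_card_le_rank; rewrite inE (indep_sub matI BI (subsetDl B S)) disjoint_setDl.
apply/bigmax_leqP => A; rewrite inE => /andP [AI dAS].
have := indep_card_le_rank (indep_setU_series_classD1 AI dAS series_class_id).
rewrite cardsU_disjoint; last by apply: disjointWr dAS; apply: subD1set.
have := card_basis_setD_series_class BI cB eB.
by rewrite (cardsD1 e S) series_class_id; lia.
Qed.

Lemma basis_delete_series_class B : B \in I -> #|B| = mrank I -> e \notin B ->
  B :\: S \in delete I S /\ #|B :\: S| = mrank (delete I S).
Proof.
move=> BI cB eB; split.
  by rewrite inE (indep_sub matI BI (subsetDl B S)) disjoint_setDl.
apply/eqP; rewrite -(eqn_add2r #|S|) mrank_delete_series_class.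
by rewrite card_basis_setD_series_class.
Qed.

Lemma delete_series_class_coloop_free : coloop_free (delete I S).
Proof.
move=> x; have [xS | xS] := boolP (x \in S).
  have [B [BI cB eB]] := cfI e; have [BSI cBS] := basis_delete_series_class BI cB eB.
  by exists (B :\: S); split; rewrite // inE xS.
have xe : x != e by apply: contraNneq xS => ->; apply: series_class_id.
move: xS; rewrite inE (negbTE xe) => /forall_inPn [B BI].
rewrite negb_imply => /andP [/andP [/eqP cB eB] xB].
have [BSI cBS] := basis_delete_series_class BI cB eB.
by exists (B :\: S); split; rewrite // inE negb_and xB orbT.
Qed.

End SeriesClass.

Section SubsetSums.
Local Open Scope ring_scope.
Variable T : finType.
Implicit Types S X : {set T}.

Lemma sum_subsets_card (R : nmodType) S (F : nat -> R) :
  \sum_(X : {set T} | X \subset S) F #|X| = \sum_(i < #|S|.+1) F i *+ 'C(#|S|, i).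
Proof.
rewrite (partition_big (fun X : {set T} => inord #|X| : 'I_#|S|.+1) xpredT) //=.
apply: eq_bigr => i _; rewrite -cards_draws -sumr_const.
apply: eq_big => X; rewrite ?inE.
  by case: (boolP (X \subset S)) => //= sXS; rewrite -val_eqE /= inordK ?ltnS ?subset_leq_card.
by case/andP => sXS /eqP <-; rewrite inordK ?ltnS ?subset_leq_card.
Qed.

Lemma sum_subsets_expr (R : comPzRingType) (a : R) S :
  \sum_(X : {set T} | X \subset S) a ^+ (#|S| - #|X|) = (a + 1) ^+ #|S|.
Proof.
rewrite (sum_subsets_card S (fun i => a ^+ (#|S| - i))) exprDn.
by apply: eq_bigr => i _; rewrite expr1n mulr1.
Qed.

Lemma sum_proper_subsets_neg2_ge0 S :
  0 <= \sum_(X : {set T} | X \proper S) (-2 : int) ^+ (#|S|.-1 - #|X|).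
Proof.
set c := \sum_(X | _) _.
have : -2 * c = (-1) ^+ #|S| - 1.
  have -> : (-1 : int) ^+ #|S| = (-2 + 1) ^+ #|S| by [].
  rewrite -sum_subsets_expr (bigD1 S) //= subnn expr0 addrC addrK mulr_sumr.
  apply: eq_big => [X | X]; first by rewrite properEneq andbC.
  by move/proper_card => ltXS; rewrite -exprS; congr (_ ^+ _); lia.
by rewrite -signr_odd; case: (odd _); rewrite ?expr0 ?expr1; lia.
Qed.

End SubsetSums.

Section IndepWeight.
Local Open Scope ring_scope.
Variable T : finType.
Implicit Types (I : {set {set T}}) (A S X : {set T}).

Definition indep_weight I : int := \sum_(A in I) (-2) ^+ (mrank I - #|A|).

Lemma sum_indep_supsets I S : is_matroid I ->
  \sum_(A in I | S \subset A) (-2) ^+ (mrank I - #|A|) = indep_weight (contract I S).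
Proof.
move=> matI; have [SI | SnI] := boolP (S \in I); last first.
  have noS A : A \in I -> ~~ (S \subset A).
    by move=> AI; apply: contra SnI; apply: (indep_sub matI AI).
  rewrite /indep_weight !big1 // => A; rewrite ?inE => /andP [].
    by move=> _ /noS; rewrite subsetUr.
  by move=> /noS/negbTE->.
rewrite big_contract /indep_weight mrank_contract //.
apply: eq_bigr => A; rewrite inE => /andP [dAS _].
by rewrite cardsU_disjoint // addnC subnDA.
Qed.

Section SplitAtSeriesClass.
Variable I : {set {set T}}.
Hypotheses (matI : is_matroid I) (cfI : coloop_free I).
Variable e : T.
Local Notation S := (series_class I e).

Lemma setU_series_class_indepE A X : A \in delete I S -> X \subset S ->
  (A :|: X \in I) && ~~ (S \subset A :|: X) = (X \proper S).
Proof.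
rewrite inE => /andP [AI dAS] sXS; apply/idP/idP => [/andP [_ nsSAX] | ltXS].
  rewrite properEneq sXS andbT; apply: contraNneq nsSAX => ->; apply: subsetUr.
rewrite (indep_setU_proper_series_class matI cfI AI dAS ltXS) /=.
have [_ [y yS yX]] := properP ltXS; apply/subsetPn; exists y => //.
by rewrite inE negb_or (disjointFl dAS yS).
Qed.

Lemma sum_indep_not_supsets :
  \sum_(A in I | ~~ (S \subset A)) (-2) ^+ (mrank I - #|A|) =
  (\sum_(X : {set T} | X \proper S) (-2) ^+ (#|S|.-1 - #|X|)) * indep_weight (delete I S).
Proof.
rewrite (partition_big (fun A => A :\: S) (mem (delete I S))) /=; last first.
  by move=> A /andP [AI _]; rewrite inE (indep_sub matI AI (subsetDl A S)) disjoint_setDl.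
rewrite mulr_sumr; apply: eq_bigr => A AdI; have /[!inE] /andP [AI dAS] := AdI.
rewrite (reindex_onto (fun X => A :|: X) (fun B => B :&: S)) /=; last first.
  by move=> B /andP [_ /eqP <-]; rewrite setUC setID.
rewrite mulrC mulr_sumr; apply: eq_big => X.
  rewrite setDUl setIUl (setDidPl dAS) (disjoint_setI0 dAS) set0U.
  have [sXS | nsXS] := boolP (X \subset S); last first.
    rewrite (contraNF (@proper_sub _ X S) nsXS); apply/negbTE.
    by apply: contra nsXS => /andP [_ /eqP <-]; apply: subsetIr.
  have -> : X :\: S = set0 by apply/eqP; rewrite setD_eq0.
  rewrite (setIidPl sXS) setU0 !eqxx !andbT.
  by rewrite setU_series_class_indepE.
case/andP => /andP [/andP [AXI nsSAX] _] /eqP eqXS.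
have sXS : X \subset S by rewrite -eqXS subsetIr.
have ltXS : X \proper S by rewrite -(setU_series_class_indepE AdI sXS) AXI.
have dAX : [disjoint A & X] by apply: disjointWr dAS.
have rk_del := mrank_delete_series_class matI cfI e.
have le_A_rk := indep_card_le_rank AdI; have lt_XS := proper_card ltXS.
by rewrite -exprD cardsU_disjoint //; congr (_ ^+ _); lia.
Qed.

Lemma indep_weight_split : indep_weight I = indep_weight (contract I S) +
  (\sum_(X : {set T} | X \proper S) (-2) ^+ (#|S|.-1 - #|X|)) * indep_weight (delete I S).
Proof.
rewrite /indep_weight (bigID (fun A => S \subset A)) /=.
by rewrite sum_indep_supsets // sum_indep_not_supsets.
Qed.

End SplitAtSeriesClass.

Lemma indep_weight_ge0 I : is_matroid I -> coloop_free I -> 0 <= indep_weight I.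
Proof.
move: {2}#|I|.+1 (ltnSn #|I|) => n; elim: n I => // n IHn I ltIn matI cfI.
have IH J : is_matroid J -> coloop_free J -> (#|J| < #|I|)%N -> 0 <= indep_weight J.
  by move=> matJ cfJ ltJI; apply: IHn => //; apply: leq_trans ltJI _; rewrite -ltnS.
have [e eI | noPoint] := pickP (fun x => [set x] \in I); last first.
  have rk0 : mrank I = 0%N.
    apply/eqP; rewrite -leqn0; apply/bigmax_leqP => A AI; rewrite leqn0 cards_eq0.
    apply/eqP/setP => x; rewrite inE; apply/negbTE/negP => xA.
    by move: (noPoint x); rewrite (indep_sub matI AI) // sub1set.
  by apply: sumr_ge0 => A _; rewrite rk0.
have eS := series_class_id I e.
rewrite (indep_weight_split matI cfI e) addr_ge0 ?mulr_ge0 ?sum_proper_subsets_neg2_ge0 //.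
  have [SI | SnI] := boolP (series_class I e \in I); last first.
    rewrite /indep_weight big1 // => A; rewrite inE => /andP [_ ASI].
    by rewrite (indep_sub matI ASI (subsetUr _ _)) in SnI.
  apply: IH; [exact: contract_matroid | exact: contract_coloop_free |].
  by apply: card_contract_lt => //; apply/set0Pn; exists e.
apply: IH; [exact: delete_matroid | exact: delete_series_class_coloop_free |].
exact: card_delete_lt eI eS.
Qed.

End IndepWeight.

Section FVector.
Local Open Scope ring_scope.
Variable T : finType.
Implicit Types (I : {set {set T}}) (A K : {set T}).

Lemma sum_fvec (R : nmodType) I n (F : nat -> R) : (mrank I <= n)%N ->
  \sum_(i < n.+1) F i *+ fvec I i = \sum_(A in I) F #|A|.
Proof.
move=> rk_le_n; rewrite (partition_big (fun A => inord #|A| : 'I_n.+1) xpredT) //=.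
apply: eq_bigr => i _; rewrite -sumr_const; apply: eq_big => [A | A].
  rewrite inE; case: (boolP (A \in I)) => //= AI.
  by rewrite -val_eqE /= inordK // ltnS (leq_trans (indep_card_le_rank AI)).
by rewrite inE => /andP [_ /eqP <-].
Qed.

Lemma sum_binomial_card (R : nmodType) I (w : {set T} -> R) k :
  \sum_(A in I) w A *+ 'C(#|A|, k) =
  \sum_(K : {set T} | #|K| == k) \sum_(A in I | K \subset A) w A.
Proof.
rewrite [RHS](exchange_big_dep (mem I)) /=; last by move=> K A _ /andP [].
apply: eq_bigr => A AI; rewrite -cards_draws -sumr_const.
by apply: eq_bigl => K; rewrite inE AI andbC.
Qed.

Lemma sum_fvec_binomial I k : is_matroid I ->
  \sum_(k <= i < (mrank I).+1)
     ('C(i, k)%:Z * (-2) ^+ (mrank I - i) * (fvec I i)%:Z : int) =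
  \sum_(K in I | #|K| == k) indep_weight (contract I K).
Proof.
move=> matI; set d := mrank I.
have -> : \sum_(k <= i < d.+1) ('C(i, k)%:Z * (-2) ^+ (d - i) * (fvec I i)%:Z : int) =
          \sum_(i < d.+1) ('C(i, k)%:Z * (-2) ^+ (d - i)) *+ fvec I i.
  rewrite big_geq_mkord big_mkcond; apply: eq_bigr => i _.
  rewrite -[(fvec I i)%:Z]natz mulr_natr.
  by case: leqP => // /bin_small ->; rewrite mul0r mul0rn.
rewrite (sum_fvec (fun i => 'C(i, k)%:Z * (-2) ^+ (d - i)) (leqnn d)).
under eq_bigr do rewrite -natz mulr_natl.
rewrite sum_binomial_card (bigID (mem I)) /= [X in _ + X]big1 ?addr0; last first.
  move=> K /andP [_ KnI]; apply: big1 => A /andP [AI sKA].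
  by rewrite (indep_sub matI AI sKA) in KnI.
by apply: eq_big => [K | K _]; [rewrite andbC | rewrite sum_indep_supsets].
Qed.

End FVector.

Local Open Scope ring_scope.

Theorem theorem0p3 (T : finType) (I : {set {set T}}) (d : nat) :
  is_matroid I -> mrank I = d ->
  (forall x : T, ~ is_coloop I x) ->
  forall k : nat, (k <= d)%N ->
    0 <= \sum_(k <= i < d.+1)
           ('C(i, k)%:Z * (-2) ^+ (d - i) * (fvec I i)%:Z : int).
Proof.
move=> matI <- /(coloop_freeP matI) cfI k _; rewrite sum_fvec_binomial //.
apply: sumr_ge0 => K /andP [KI _]; apply: indep_weight_ge0.
  exact: contract_matroid.
exact: contract_coloop_free.
Qed.
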